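(* Let $k\ge 2$ and let $s$ be a normalized, fully $k$-ary string of length $n$. Then $d_{\rm g}(s)\le n-2$.
   Context: Strings are finite words over the alphabet $\{0,1,2,\dots\}$. A string is \emph{normalized} if no two adjacent symbols are equal; the \emph{normalization} of a string is obtained by replacing every maximal run of identical symbols by a single copy of that symbol. A string is \emph{fully $k$-ary} if the set of symbols occurring in it is exactly $\{0,1,\dots,k-1\}$. For a normalized string $s=s_1s_2\cdots s_n$ and $1\le i\le n$, the flip (prefix reversal) $f^{(i)}(s)$ is the normalization of $s_i s_{i-1}\cdots s_1 s_{i+1}\cdots s_n$. The \emph{grouping distance} $d_{\rm g}(s)$ of a normalized fully $k$-ary string $s$ is the minimum number of flips needed to transform $s$ into a string of length $k$. *)

From mathcomp Require Import all_boot.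
Set Implicit Arguments. Unset Strict Implicit. Unset Printing Implicit Defensive.

Definition normalized (s : seq nat) : bool :=
  match s with [::] => true | x :: t => path (fun a b => a != b) x t end.

Fixpoint normalize (s : seq nat) : seq nat :=
  match s with
  | [::] => [::]
  | x :: t => match normalize t with
              | [::] => [:: x]
              | y :: u => if x == y then y :: u else x :: y :: u
              end
  end.

Definition fully_kary (k : nat) (s : seq nat) : Prop :=
  forall a : nat, a \in s <-> a < k.

Definition flip (i : nat) (s : seq nat) : seq nat :=
  normalize (rev (take i s) ++ drop i s).

Fixpoint flips_to (m : nat) (s t : seq nat) : Prop :=
  match m with
  | 0 => s = t
  | m'.+1 => exists i, 1 <= i <= size s /\ flips_to m' (flip i s) t
  end.

(* d_g(s) <= d : some string of length k is reachable with at most d flips *)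
Definition gdist_le (k : nat) (s : seq nat) (d : nat) : Prop :=
  exists m t, m <= d /\ size t = k /\ flips_to m s t.

From mathcomp Require Import all_boot.
From mathcomp Require Import zify.

Set Implicit Arguments.
Unset Strict Implicit.
Unset Printing Implicit Defensive.

(* A duplicate-free string already has length k.
   If the first symbol x occurs again, flipping the prefix that ends just
   before its second occurrence brings the two copies of x together, so
   normalization shortens the string by one flip.  Otherwise x occurs only at
   the front: flipping the whole string parks x at the end, where no later flip
   disturbs it, and what remains is a string over k - 1 symbols that is shorter
   by one, so the budget n - 2 is again respected. *)

Lemma mem_normalize (w : seq nat) : normalize w =i w.
Proof.
elim: w => [|a w IH] z //=.
have IHa := IH a; have IHz := IH z.
case E: (normalize w) IHa IHz => [|y u] IHa IHz.
  by rewrite !inE -IHz in_nil orbF.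
case: eqP => [ay|_]; last by rewrite !inE -IHz.
by rewrite IHz inE; case: eqP => //= ->; rewrite -IHa ay inE eqxx.
Qed.

Lemma normalize_normalized (w : seq nat) : normalized (normalize w).
Proof.
elim: w => [|a w IH] //=.
case: (normalize w) IH => [|y u] IH //.
by case: eqP => // /eqP H /=; rewrite H.
Qed.

Lemma size_normalize (w : seq nat) : size (normalize w) <= size w.
Proof.
elim: w => [|a w IH] //=.
by case: (normalize w) IH => [|y u] /= IH //; case: eqP => _ /=; lia.
Qed.

Lemma normalize_cons_dup (u : seq nat) x v :
  normalize (u ++ x :: x :: v) = normalize (u ++ x :: v).
Proof.
elim: u => [|a u IH] /=; last by rewrite IH.
by case: (normalize v) => [|y w]; rewrite ?eqxx //; case: eqP => [->|_]; rewrite eqxx.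
Qed.

Lemma normalize_rcons (w : seq nat) x : x \notin w ->
  normalize (rcons w x) = rcons (normalize w) x.
Proof.
elim: w => [|a w IH] //=; rewrite inE negb_or => /andP [xa xw].
rewrite IH //; case: (normalize w) => [|y u] /=; first by rewrite eq_sym (negbTE xa).
by case: eqP.
Qed.

Lemma mem_flip i (s : seq nat) : flip i s =i s.
Proof.
by move=> z; rewrite /flip mem_normalize mem_cat mem_rev -mem_cat cat_take_drop.
Qed.

Lemma size_undup_flip i (s : seq nat) : size (undup (flip i s)) = size (undup s).
Proof. exact/perm_size/perm_undup/mem_flip. Qed.

Lemma normalized_flip i (s : seq nat) : normalized (flip i s).
Proof. exact: normalize_normalized. Qed.

Lemma flip_rcons i (u : seq nat) x : i <= size u -> x \notin u ->
  flip i (rcons u x) = rcons (flip i u) x.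
Proof.
move=> le_iu xu; have drop_rcons : drop i (rcons u x) = rcons (drop i u) x.
  rewrite -!cats1 drop_cat; case: ltnP => // le_ui.
  have -> : i = size u by apply/eqP; rewrite eqn_leq le_iu.
  by rewrite drop_size subnn.
rewrite /flip -cats1 takel_cat // cats1 drop_rcons -rcons_cat normalize_rcons //.
by rewrite mem_cat mem_rev -mem_cat cat_take_drop.
Qed.

(* The second occurrence of x is at position [(index x s).+2] of [x :: s]. *)
Lemma size_flip_index x (s : seq nat) : x \in s ->
  size (flip (index x s).+1 (x :: s)) < size (x :: s).
Proof.
move=> xs; have lt_js : index x s < size s by rewrite index_mem.
rewrite /flip /= (drop_nth x lt_js) nth_index // rev_cons -cats1 -catA /=.
rewrite normalize_cons_dup (leq_ltn_trans (size_normalize _)) //.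
by rewrite size_cat size_rev /= size_take size_drop lt_js; lia.
Qed.

Lemma flip_size_notin x (s : seq nat) : x \notin s ->
  flip (size s).+1 (x :: s) = rcons (normalize (rev s)) x.
Proof.
move=> xs; rewrite /flip /= take_size drop_size cats0 rev_cons.
by rewrite normalize_rcons // mem_rev.
Qed.

Lemma normalized_behead (s : seq nat) : normalized s -> normalized (behead s).
Proof. by case: s => [|a [|b t]] //= /andP []. Qed.

Lemma size_undup_normalized (s : seq nat) : normalized s -> 1 < size s ->
  1 < size (undup s).
Proof.
case: s => [|a [|b t]] // /= /andP [ab _] _.
have sub : {subset [:: a; b] <= undup [:: a, b & t]}.
  by move=> z; rewrite mem_undup !inE => /orP [] /eqP ->; rewrite eqxx ?orbT.
by apply: leq_trans (uniq_leq_size _ sub) => //=; rewrite inE ab.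
Qed.

Lemma flips_to_rcons m (u t : seq nat) x : x \notin u ->
  flips_to m u t -> flips_to m (rcons u x) (rcons t x).
Proof.
elim: m u => [|m IH] u xu /=; first by move=> ->.
case=> i [/andP [i_gt0 le_iu] ut]; exists i; split.
  by rewrite size_rcons i_gt0 ltnW.
by rewrite flip_rcons //; apply: IH; rewrite ?mem_flip.
Qed.

Lemma gdist_le_leq k (s : seq nat) d1 d2 : d1 <= d2 ->
  gdist_le k s d1 -> gdist_le k s d2.
Proof.
by move=> le_d [m [t [le_md [kt st]]]]; exists m, t; split=> //; apply: leq_trans le_d.
Qed.

Lemma gdist_le_flip k i (s : seq nat) d : 1 <= i <= size s ->
  gdist_le k (flip i s) d -> gdist_le k s d.+1.
Proof.
move=> i_s [m [t [le_md [kt st]]]].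
by exists m.+1, t; split=> //; split=> //; exists i.
Qed.

Lemma gdist_le_rcons k (u : seq nat) x d : x \notin u ->
  gdist_le k u d -> gdist_le k.+1 (rcons u x) d.
Proof.
move=> xu [m [t [le_md [kt ut]]]]; exists m, (rcons t x).
by rewrite size_rcons kt; split=> //; split=> //; apply: flips_to_rcons.
Qed.

Lemma gdist_le_size_undup (s : seq nat) : normalized s -> 1 < size (undup s) ->
  gdist_le (size (undup s)) s (size s - 2).
Proof.
have [n] := ubnP (size s); elim: n s => // n IH s lt_sn ns ks.
have [us|not_us] := boolP (uniq s); first by exists 0, s; rewrite undup_id.
case: s not_us lt_sn ns ks => // x s not_us lt_sn ns.
move kE: (size (undup (x :: s))) => k ks.
have [xs|xs] := boolP (x \in s).
  set T := flip (index x s).+1 (x :: s).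
  have kT : size (undup T) = k by rewrite size_undup_flip kE.
  have lt_T : size T < size (x :: s) by rewrite size_flip_index.
  have le_kT : size (undup T) <= size T := size_undup T.
  have gT : gdist_le k T (size T - 2).
    by rewrite -kT; apply: IH; rewrite ?normalized_flip ?kT //; lia.
  apply: gdist_le_leq _ (gdist_le_flip _ gT); first by lia.
  by rewrite /= ltnS index_size.
have ks' : 1 < size (undup s).
  apply: size_undup_normalized (normalized_behead ns) _.
  case: s not_us xs {ns ks lt_sn kE} => [|a [|b t]] //=.
  by rewrite andbT => /negP nxa /nxa.
set U := normalize (rev s).
have kU : size (undup U) = size (undup s).
  by apply/perm_size/perm_undup => z; rewrite mem_normalize mem_rev.
have le_U : size U <= size s by rewrite (leq_trans (size_normalize _)) ?size_rev.
have le_kU : size (undup U) <= size U := size_undup U.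
have gU : gdist_le (size (undup s)) U (size U - 2).
  by rewrite -kU; apply: IH; rewrite ?normalize_normalized ?kU //; move: lt_sn => /=; lia.
have gxU : gdist_le k (rcons U x) (size U - 2).
  by rewrite -kE /= (negbTE xs); apply: gdist_le_rcons gU; rewrite mem_normalize mem_rev.
rewrite -(flip_size_notin xs) in gxU.
by apply: gdist_le_leq _ (gdist_le_flip _ gxU); rewrite /= ?ltnS ?leqnn //; lia.
Qed.

Lemma size_undup_fully_kary k (s : seq nat) : fully_kary k s -> size (undup s) = k.
Proof.
move=> sk; rewrite -(size_iota 0 k); apply/perm_size/uniq_perm.
- exact: undup_uniq.
- exact: iota_uniq.
- by move=> z; rewrite mem_undup mem_iota add0n; apply/idP/idP => /sk.
Qed.

Theorem lemma3p2 (k : nat) (s : seq nat) :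
  2 <= k -> normalized s -> fully_kary k s ->
  gdist_le k s (size s - 2).
Proof.
move=> k_ge2 ns /size_undup_fully_kary ks.
by rewrite -ks; apply: gdist_le_size_undup; rewrite ?ks.
Qed.
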